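(* Let $G$ be a connected graph on at least two vertices, and let $b(G)$ denote its number of blocks. Then \[ \operatorname{cdim}(G)\geq\frac{b(G)+1}{2}. \]
   Context: All graphs are finite, simple, undirected and nonempty. A block of a graph is a maximal connected subgraph that has no cut vertex of its own (so each block of a connected graph with at least two vertices is either a bridge $K_2$ or a maximal $2$-connected subgraph). For distinct vertices $v,w$, $\kappa(v,w)$ is the maximum number of internally vertex-disjoint $v$–$w$ paths (an edge $vw$ counts as one such path); $\kappa(v,v)=\infty$. For an ordered vertex set $W=(w_1,\ldots,w_k)$, $r_G(v,W)=[\kappa(v,w_1),\ldots,\kappa(v,w_k)]$. $W$ is resolving if $r_G(v_1,W)=r_G(v_2,W)$ implies $v_1=v_2$. The connectivity dimension $\operatorname{cdim}(G)$ is the minimum cardinality of a resolving set. *)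

From HB Require Import structures.
From mathcomp Require Import all_boot all_order all_algebra.
From Stdlib Require Import ClassicalDescription.
Set Implicit Arguments. Unset Strict Implicit. Unset Printing Implicit Defensive.

(* A graph is a relation e on a finite vertex type T; the theorem assumes
   it symmetric and irreflexive (finite simple undirected graph). *)

Definition pb (P : Prop) : bool :=
  if excluded_middle_informative P then true else false.

Section Graph.
Variables (T : finType) (e : rel T).

Definition vw_path (v w : T) (p : seq T) : bool :=
  path e v (rcons p w) && uniq (v :: rcons p w).

Definition disjoint_vw_paths (v w : T) (F : seq (seq T)) : bool :=
  [&& all (vw_path v w) F, uniq F & uniq (flatten F)].

(* kappa v w : None encodes infinity (v = w); otherwise the maximum number
   of internally vertex-disjoint v-w paths.  Such a family has at most
   #|T| - 1 members, so the bound #|T|.+2 on the search range is harmless. *)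
Definition kappa (v w : T) : option nat :=
  if v == w then None
  else Some (\max_(k < #|T|.+2 |
               pb (exists F, disjoint_vw_paths v w F /\ size F = k)) (k : nat)).

Definition resolving (W : {set T}) : bool :=
  [forall v1, forall v2,
     [forall w in W, kappa v1 w == kappa v2 w] ==> (v1 == v2)].

Definition cdim : nat :=
  \big[minn/#|T|]_(W : {set T} | resolving W) #|W|.

Definition restr (B : {set T}) : rel T :=
  [rel x y | [&& e x y, x \in B & y \in B]].

Definition connected_in (B : {set T}) : bool :=
  [forall x in B, forall y in B, connect (restr B) x y].

Definition blocklike (B : {set T}) : bool :=
  connected_in B && [forall v in B, connected_in (B :\ v)].

Definition blocks : {set {set T}} := [set B | maxset blocklike B].

Definition nblocks : nat := #|blocks|.

End Graph.

From HB Require Import structures.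
From mathcomp Require Import all_boot all_order all_algebra zify.
From Stdlib Require Import ClassicalDescription.
Set Implicit Arguments. Unset Strict Implicit. Unset Printing Implicit Defensive.

(* Fix a resolving set W and a root r in W.  Every block B has a unique entry
   vertex, through which paths from r reach B (r itself when r is in B); the
   other vertices of B are its children, and no vertex is a child of two
   blocks.  Blocks with a child in W inject into W minus r.  A block without
   child in W, one of whose children v lies in another block B' of size at
   least 3 meeting W, is sent to B': v is the entry of B', so the vertex of W
   in B' is a child of B'; this map is injective as well.  In each remaining
   block, a child v has kappa(v, w) = 1 for every w in W: a block of size at
   least 3 containing v and w would have to be the block itself, with entry w,
   and then the neighbors of w in it would have pairwise distinct values
   kappa(_, w) between 2 and their number.  As W is resolving, at most one
   vertex outside W has this vector, so there is at most one remaining block,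
   and b(G) <= 2|W| - 1. *)

Section Restriction.
Variables (T : finType) (e : rel T).
Hypothesis e_sym : symmetric e.

Lemma restrE (S : {set T}) x y : restr e S x y = [&& e x y, x \in S & y \in S].
Proof. by []. Qed.

Lemma restr_edge S x y : restr e S x y -> e x y.
Proof. by case/and3P. Qed.

Lemma restr_sym S : symmetric (restr e S).
Proof. by move=> x y; rewrite !restrE e_sym; case: (e y x); case: (x \in S); case: (y \in S). Qed.

Lemma connect_restr_sym S x y : connect (restr e S) x y = connect (restr e S) y x.
Proof. exact: (sym_connect_sym (restr_sym S)). Qed.

Lemma connect_restrS (S S' : {set T}) x y : S \subset S' ->
  connect (restr e S) x y -> connect (restr e S') x y.
Proof.
move=> sub; apply: connect_sub => a b /and3P[eab aS bS]; apply: connect1.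
by rewrite restrE eab (subsetP sub _ aS) (subsetP sub _ bS).
Qed.

Lemma path_restr (S : {set T}) x s : path e x s -> x \in S -> all (mem S) s ->
  path (restr e S) x s.
Proof.
elim: s x => //= y s IH x /andP[exy ps] xS /andP[yS aS].
by rewrite restrE exy xS yS IH.
Qed.

Lemma restr_path_mem (S : {set T}) x s : path (restr e S) x s -> all (mem S) s.
Proof.
elim: s x => //= y s IH x /andP[]; rewrite restrE => /and3P[_ _ yS] ps.
by rewrite yS (IH y).
Qed.

Lemma restr_path_edge (S : {set T}) x s : path (restr e S) x s -> path e x s.
Proof. exact/sub_path/restr_edge. Qed.

Lemma connect_restr_path (S : {set T}) x s : path e x s -> x \in S ->
  all (mem S) s -> {in x :: s, forall y, connect (restr e S) x y}.
Proof. by move=> p xS aS y ys; apply: (path_connect (path_restr p xS aS)). Qed.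

Lemma connected_in_connect (S : {set T}) x y : connected_in e S -> x \in S ->
  y \in S -> connect (restr e S) x y.
Proof. by move=> /forallP/(_ x)/implyP cS /cS/forallP/(_ y)/implyP. Qed.

Lemma connected_in_from (S : {set T}) h : h \in S ->
  {in S, forall y, connect (restr e S) h y} -> connected_in e S.
Proof.
move=> hS hS_conn; apply/forallP => x; apply/implyP => xS.
apply/forallP => y; apply/implyP => yS.
by apply: connect_trans (hS_conn y yS); rewrite connect_restr_sym; apply: hS_conn.
Qed.

Lemma path_rev_rcons x Q y : path e x (rcons Q y) -> path e y (rcons (rev Q) x).
Proof.
move=> p; have := rev_path e x (rcons Q y).
rewrite last_rcons belast_rcons rev_cons => ->.
by rewrite (eq_path (e' := e)) // => a b; rewrite e_sym.
Qed.

Lemma path_first_hit (B : {set T}) x s : x \notin B -> path e x s -> last x s \in B ->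
  exists Q z rest, [/\ s = Q ++ z :: rest, z \in B & all (fun w => w \notin B) Q].
Proof.
elim: s x => [|a s IH] x xB /=; first by move=> _ xB'; move: xB; rewrite xB'.
move=> /andP[_ p] l; case: (boolP (a \in B)) => aB; first by exists [::], a, s.
have [Q [z [rest [-> zB aQ]]]] := IH a aB p l.
by exists (a :: Q), z, rest; rewrite /= aB aQ.
Qed.

End Restriction.

Section Blocklike.
Variables (T : finType) (e : rel T).
Hypothesis e_sym : symmetric e.

Lemma blocklike_connected B : blocklike e B -> connected_in e B.
Proof. by case/andP. Qed.

Lemma blocklike_connected_del B z : blocklike e B -> connected_in e (B :\ z).
Proof.
case/andP=> cB /forallP/(_ z)/implyP; case: (boolP (z \in B)) => [zB|zB _]; first exact.
suff -> : B :\ z = B by [].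
by apply/setP => w; rewrite !inE; case: eqVneq => // ->; rewrite (negbTE zB).
Qed.

Lemma blocklikeI (B : {set T}) : connected_in e B ->
  (forall z, z \in B -> connected_in e (B :\ z)) -> blocklike e B.
Proof. by move=> cB cBz; rewrite /blocklike cB; apply/forall_inP. Qed.

Lemma blocklike_edge x y : e x y -> blocklike e [set x; y].
Proof.
move=> exy; apply: blocklikeI.
  apply: (connected_in_from e_sym (h := x)); first by rewrite !inE eqxx.
  move=> w; rewrite !inE => /orP[]/eqP->; first exact: connect0.
  by apply: connect1; rewrite restrE exy !inE !eqxx orbT.
move=> z zS; apply/forallP => a; apply/implyP => aS; apply/forallP => b; apply/implyP => bS.
suff -> : a = b by apply: connect0.
move: zS aS bS; rewrite !inE.
case/orP=> /eqP->; case/andP=> az /orP[]/eqP ea; case/andP=> bz /orP[]/eqP eb; subst;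
  rewrite ?eqxx // in az bz.
Qed.

Lemma connected_in_neighbor (S : {set T}) x y : connected_in e S -> x \in S ->
  y \in S -> x != y -> exists2 z, z \in S & e x z.
Proof.
move=> cS xS yS nxy; move: (connected_in_connect cS xS yS) => /connectP[[|z s] p ey].
  by move: nxy; rewrite ey eqxx.
by move: p => /= /andP[]; rewrite restrE => /and3P[exz _ zS] _; exists z.
Qed.

Lemma blocklike_union B1 B2 x y : blocklike e B1 -> blocklike e B2 ->
  x \in B1 -> x \in B2 -> y \in B1 -> y \in B2 -> x != y -> blocklike e (B1 :|: B2).
Proof.
move=> b1 b2 x1 x2 y1 y2 nxy.
apply: blocklikeI.
  apply: (connected_in_from e_sym (h := x)); first by rewrite inE x1.
  move=> w; rewrite inE => /orP[w1|w2].
    by apply: (connect_restrS (subsetUl _ _)); apply: connected_in_connect => //;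
      apply: blocklike_connected.
  by apply: (connect_restrS (subsetUr _ _)); apply: connected_in_connect => //;
    apply: blocklike_connected.
move=> z _.
have [h [hz h1 h2]] : exists h, [/\ h != z, h \in B1 & h \in B2].
  by case: (eqVneq x z) => [xz|]; [exists y; rewrite -xz eq_sym | exists x].
apply: (connected_in_from e_sym (h := h)); first by rewrite !inE hz h1.
move=> w; rewrite !inE => /andP[wz /orP[w1|w2]].
  apply: (connect_restrS (setSD _ (subsetUl _ _))).
  by apply: connected_in_connect; [apply: blocklike_connected_del|rewrite !inE hz|rewrite !inE wz].
apply: (connect_restrS (setSD _ (subsetUr _ _))).
by apply: connected_in_connect; [apply: blocklike_connected_del|rewrite !inE hz|rewrite !inE wz].
Qed.

End Blocklike.

Section Ear.
Variables (T : finType) (e : rel T).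
Hypothesis e_sym : symmetric e.
Variables (B : {set T}) (x y : T) (Q : seq T).
Hypotheses (bB : blocklike e B) (xB : x \in B) (yB : y \in B) (nxy : x != y).
Hypotheses (pQ : path e x (rcons Q y)) (uQ : uniq Q) (QnB : all (fun z => z \notin B) Q).

Let S := B :|: [set z in Q].

Let BS : B \subset S. Proof. exact: subsetUl. Qed.
Let QS z : z \in Q -> z \in S. Proof. by move=> zQ; rewrite !inE zQ orbT. Qed.
Let path_xQ : path e x Q. Proof. by move: pQ; rewrite rcons_path => /andP[]. Qed.
Let path_yQ : path e y (rev Q).
Proof. by move: (path_rev_rcons e_sym pQ); rewrite rcons_path => /andP[]. Qed.

Lemma ear_connected : connected_in e S.
Proof.
apply: (connected_in_from e_sym (h := x)); first by rewrite inE xB.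
move=> z; rewrite !inE => /orP[zB|zQ].
  by apply: (connect_restrS BS); apply: connected_in_connect => //; apply: blocklike_connected.
apply: (connect_restr_path path_xQ); first by rewrite inE xB.
  by apply/allP => w /QS.
by rewrite inE zQ orbT.
Qed.

Lemma ear_connected_del_block z : z \in B -> connected_in e (S :\ z).
Proof.
move=> zB.
have [h [[hB hz] [s ps sQ]]] : exists h, (h \in B /\ h != z) /\
    exists2 s, path e h s & s =i Q.
  case: (eqVneq z x) => [->|zx]; last by exists x; rewrite eq_sym; split; [|exists Q].
  by exists y; rewrite eq_sym; split; [|exists (rev Q) => // w; rewrite mem_rev].
have sSz : all (mem (S :\ z)) s.
  apply/allP => w; rewrite sQ => wQ /=; rewrite in_setD1 QS // andbT.
  by apply: contraTneq (allP QnB w wQ) => ->; rewrite negbK.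
apply: (connected_in_from e_sym (h := h)); first by rewrite !inE hz hB.
move=> w; rewrite !inE => /andP[wz /orP[wB|wQ]].
  apply: (connect_restrS (setSD _ BS)); apply: connected_in_connect;
    by [apply: blocklike_connected_del|rewrite !inE hz|rewrite !inE wz].
apply: (connect_restr_path ps); first by rewrite !inE hz hB.
  exact: sSz.
by rewrite inE sQ wQ orbT.
Qed.

Lemma ear_connected_del_ear z : z \in Q -> connected_in e (S :\ z).
Proof.
move=> zQ; have zB : z \notin B := allP QnB z zQ.
have BSz : B \subset S :\ z.
  by apply/subsetP => w wB; rewrite !inE wB andbT; apply: contraTneq wB => ->.
have conB w : w \in B -> connect (restr e (S :\ z)) x w.
  by move=> wB; apply: (connect_restrS BSz); apply: connected_in_connect => //;
    apply: blocklike_connected.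
have [Q1 [Q2 eQ]] : exists Q1 Q2, Q = Q1 ++ z :: Q2.
  exists (take (index z Q) Q), (drop (index z Q).+1 Q).
  by rewrite -{1}(cat_take_drop (index z Q) Q) (drop_nth z) ?index_mem ?nth_index.
have QS' w : w \in Q1 ++ z :: Q2 -> w \in S by rewrite -eQ; apply: QS.
move: uQ path_xQ path_yQ; rewrite eQ cat_uniq /= => /and3P[_ /norP[zQ1 _] /andP[zQ2 _]].
move=> pQ1 pQ2.
have xSz : x \in S :\ z by rewrite !inE xB andbT; apply: contraTneq xB => ->.
apply: (connected_in_from e_sym (h := x)) => // w.
rewrite !inE => /andP[wz /orP[wB|]]; first exact: conB.
rewrite eQ mem_cat inE => /orP[wQ1|/orP[/eqP wz'|wQ2]].
- move: pQ1; rewrite cat_path => /andP[pQ1 _].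
  apply: (connect_restr_path pQ1) => //; last by rewrite inE wQ1 orbT.
  apply/allP => v vQ1 /=; rewrite in_setD1 QS' ?mem_cat ?vQ1 // andbT.
  by apply: contraNneq zQ1 => <-.
- by rewrite wz' eqxx in wz.
apply: connect_trans (conB y yB) _.
move: pQ2; rewrite rev_cat rev_cons cat_path rcons_path => /andP[/andP[pQ2 _] _].
have ySz : y \in S :\ z by rewrite !inE yB andbT; apply: contraTneq yB => ->.
apply: (connect_restr_path pQ2) => //; last by rewrite inE mem_rev wQ2 orbT.
apply/allP => v; rewrite mem_rev => vQ2 /=.
rewrite in_setD1 QS' ?mem_cat ?inE ?vQ2 ?orbT // andbT.
by apply: contraNneq zQ2 => <-.
Qed.

Lemma blocklike_ear : blocklike e S.
Proof.
apply: blocklikeI; first exact: ear_connected.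
move=> z; rewrite inE => /orP[zB|]; first exact: ear_connected_del_block.
by rewrite inE; apply: ear_connected_del_ear.
Qed.

End Ear.

Section Blocks.
Variables (T : finType) (e : rel T).
Hypothesis e_sym : symmetric e.

Lemma blocks_blocklike B : B \in blocks e -> blocklike e B.
Proof. by rewrite inE => /maxsetp. Qed.

Lemma blocks_max B C : B \in blocks e -> blocklike e C -> B \subset C -> C = B.
Proof. by rewrite inE => /maxsetsup; apply. Qed.

Lemma blocks_eq B1 B2 x y : B1 \in blocks e -> B2 \in blocks e ->
  x \in B1 -> x \in B2 -> y \in B1 -> y \in B2 -> x != y -> B1 = B2.
Proof.
move=> k1 k2 x1 x2 y1 y2 nxy.
have bU := blocklike_union e_sym (blocks_blocklike k1) (blocks_blocklike k2) x1 x2 y1 y2 nxy.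
by rewrite -(blocks_max k1 bU (subsetUl _ _)) (blocks_max k2 bU (subsetUr _ _)).
Qed.

(* A path leaving a block must return to it through the vertex it left from,
   otherwise it would be an ear extending the block. *)
Lemma block_no_detour (B : {set T}) x z Q : B \in blocks e -> x \in B -> z \in B ->
  x != z -> Q != [::] -> all (fun w => w \notin B) Q -> path e x (rcons Q z) -> False.
Proof.
move=> kB xB zB nxz nQ aQ p.
(* [e'] has no edge inside [B], so shortening keeps a vertex outside [B]. *)
pose e' := [rel a b | e a b && ~~ ((a \in B) && (b \in B))].
have pe' : path e' x (rcons Q z).
  case: Q nQ aQ p => // a Q _ /= /andP[aB aQ] /andP[exa p].
  rewrite /= exa (negbTE aB) andbF /=; clear exa.
  elim: Q a aB aQ p => [|b Q IH] a aB aQ /=; first by rewrite (negbTE aB) /= andbT => ->.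
  move=> /andP[eab p]; move: aQ => /= /andP[bB aQ].
  by rewrite eab (negbTE aB) /= IH.
have [p' [pp' up' sp' lz]] : exists p', [/\ path e' x p', uniq (x :: p'),
    {subset p' <= rcons Q z} & last x p' = z].
  by move: (last_rcons x Q z); case: (shortenP pe') => p' a b c H; exists p'; split.
case/lastP: p' pp' up' sp' lz => [|Q' z'] pp' up' sp'.
  by move=> /= zx; move: nxz; rewrite zx eqxx.
rewrite last_rcons => ez; subst z'.
have nQ' : Q' != [::] by apply/eqP => eq; move: pp'; rewrite eq /= xB zB /= !andbF.
have Q'nz : z \notin Q' by move: up'; rewrite /= rcons_uniq => /andP[_ /andP[]].
have aQ' : all (fun w => w \notin B) Q'.
  apply/allP => w wQ'; have : w \in rcons Q z by apply: sp'; rewrite mem_rcons inE wQ' orbT.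
  rewrite mem_rcons inE => /orP[/eqP ewz|wQ]; first by move: Q'nz; rewrite -ewz wQ'.
  exact: (allP aQ).
have uQ' : uniq Q' by move: up'; rewrite /= rcons_uniq => /andP[_ /andP[_ ->]].
have pQ' : path e x (rcons Q' z) by apply: sub_path pp' => a b /andP[].
have bl := blocklike_ear e_sym (blocks_blocklike kB) xB zB nxz pQ' uQ' aQ'.
have eqB := blocks_max kB bl (subsetUl _ _).
case: Q' nQ' aQ' {pp' up' sp' Q'nz uQ' pQ' bl} eqB => // w Q' _ /= /andP[wB _] eqB.
by move: wB; rewrite -eqB !inE eqxx !orbT.
Qed.

End Blocks.

Section Rooted.
Variables (T : finType) (e : rel T).
Hypothesis e_sym : symmetric e.
Hypothesis e_conn : forall x y : T, connect e x y.
Variable r : T.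

(* In the block-cutvertex tree rooted at [r], the entry of [B] is the cut
   vertex attaching [B] towards [r], or [r] itself when [r] is in [B]. *)
Definition entry (B : {set T}) (c : T) : Prop :=
  c \in B /\ (c = r \/ (r \notin B /\
     exists Q, all (fun w => w \notin B) Q /\ path e r (rcons Q c))).

Definition child (B : {set T}) (v : T) : Prop := v \in B /\ ~ entry B v.

Lemma entry_root (B : {set T}) : r \in B -> entry B r.
Proof. by move=> rB; split => //; left. Qed.

Lemma entry_unique B c1 c2 : B \in blocks e -> entry B c1 -> entry B c2 -> c1 = c2.
Proof.
move=> kB [c1B H1] [c2B H2].
case: H1 => [e1|[rB [Q1 [a1 p1]]]]; case: H2 => [e2|[rB' [Q2 [a2 p2]]]].
- by rewrite e1 e2.
- by move: rB'; rewrite -e1 c1B.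
- by move: rB; rewrite -e2 c2B.
case: (eqVneq c1 c2) => // n12; exfalso.
apply: (block_no_detour e_sym kB c1B c2B n12 (Q := rev Q1 ++ r :: Q2)).
- by case: (rev Q1).
- by rewrite all_cat /= all_rev a1 a2 rB.
by rewrite rcons_cat -cat_rcons cat_path (path_rev_rcons e_sym p1) last_rcons.
Qed.

Lemma child_neq_root (B : {set T}) v : child B v -> v != r.
Proof.
by case=> vB nE; apply/eqP => evr; apply: nE; rewrite evr; apply: entry_root; rewrite -evr.
Qed.

Lemma shared_vertex_path B1 B2 v z : B1 \in blocks e -> B2 \in blocks e -> B1 != B2 ->
  v \in B1 -> v \in B2 -> z \in B1 -> z != v ->
  exists Q, [/\ z \notin B2, all (fun w => w \notin B2) Q & path e z (rcons Q v)].
Proof.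
move=> k1 k2 n12 v1 v2 z1 nzv.
have out w : w \in B1 -> w != v -> w \notin B2.
  move=> w1 nwv; apply/negP => w2; move/eqP: n12; apply.
  exact: (blocks_eq e_sym k1 k2 w1 w2 v1 v2 nwv).
have /connectP [s ps ls] :=
  connected_in_connect (blocklike_connected (blocks_blocklike k1)) z1 v1.
have zv : z \notin [set v] by rewrite inE.
have lsv : last z s \in [set v] by rewrite -ls inE.
have [Q [v' [rest [es /set1P ev' aQ]]]] := path_first_hit zv (restr_path_edge ps) lsv.
subst v'; move: (ps); rewrite es cat_path => /andP[pQ /= /andP[lv _]].
have aQB1 : all (mem B1) Q by move: (restr_path_mem ps); rewrite es all_cat => /andP[].
exists Q; split; first exact: out.
  apply/allP => w wQ; apply: out; first exact: (allP aQB1).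
  by move: aQ => /allP/(_ w wQ); rewrite inE.
by rewrite rcons_path (restr_path_edge pQ) (restr_edge lv).
Qed.

Lemma entry_shared_path B1 B2 v z Q : B1 \in blocks e -> B2 \in blocks e -> B1 != B2 ->
  v \in B1 -> v \in B2 -> z \in B1 -> r \notin B2 ->
  all (fun w => w \notin B2) Q -> path e r (rcons Q z) -> entry B2 v.
Proof.
move=> k1 k2 n12 v1 v2 z1 rB2 aQ p; split => //; right; split => //.
case: (eqVneq z v) => [<-|nzv]; first by exists Q.
have [Q2 [zB2 aQ2 pQ2]] := shared_vertex_path k1 k2 n12 v1 v2 z1 nzv.
exists (Q ++ z :: Q2); split; first by rewrite all_cat aQ /= zB2 aQ2.
by rewrite rcons_cat -cat_rcons cat_path p last_rcons.
Qed.

Lemma entry_shared_root B1 B2 v : B1 \in blocks e -> B2 \in blocks e -> B1 != B2 ->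
  v \in B1 -> v \in B2 -> r \in B1 -> r != v -> entry B2 v.
Proof.
move=> k1 k2 n12 v1 v2 r1 nrv.
have [Q [rB2 aQ pQ]] := shared_vertex_path k1 k2 n12 v1 v2 r1 nrv.
by split => //; right; split => //; exists Q.
Qed.

Lemma child_unique B1 B2 v : B1 \in blocks e -> B2 \in blocks e ->
  child B1 v -> child B2 v -> B1 = B2.
Proof.
move=> k1 k2 [v1 nE1] [v2 nE2]; case: (eqVneq B1 B2) => // n12; exfalso.
have n21 : B2 != B1 by rewrite eq_sym.
have root_neq (B : {set T}) : v \in B -> ~ entry B v -> r \in B -> r != v.
  by move=> vB nE rB; apply/eqP => erv; apply: nE; rewrite -erv; apply: entry_root.
case: (boolP (r \in B1)) => r1.
  exact/nE2/(entry_shared_root k1 k2 n12 v1 v2 r1 (root_neq _ v1 nE1 r1)).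
case: (boolP (r \in B2)) => r2.
  exact/nE1/(entry_shared_root k2 k1 n21 v2 v1 r2 (root_neq _ v2 nE2 r2)).
have /connectP [s ps ls] := e_conn r v.
have rU : r \notin B1 :|: B2 by rewrite inE negb_or r1 r2.
have lsU : last r s \in B1 :|: B2 by rewrite -ls inE v1.
have [Q [z [rest [es zU aQ]]]] := path_first_hit rU ps lsU.
have pQ : path e r (rcons Q z).
  by move: ps; rewrite es cat_path /= => /andP[p1 /andP[ez _]]; rewrite rcons_path p1.
have [aQ1 aQ2] : all (fun w => w \notin B1) Q /\ all (fun w => w \notin B2) Q.
  by split; apply/allP => w /(allP aQ); rewrite inE negb_or => /andP[].
move: zU; rewrite inE => /orP[z1|z2].
  exact/nE2/(entry_shared_path k1 k2 n12 v1 v2 z1 r2 aQ2 pQ).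
exact/nE1/(entry_shared_path k2 k1 n21 v2 v1 z2 r1 aQ1 pQ).
Qed.

Lemma child_exists B x y : B \in blocks e -> x \in B -> y \in B -> x != y ->
  exists v, child B v.
Proof.
move=> kB xB yB nxy.
case: (classic (entry B x)) => Ex; last by exists x.
case: (classic (entry B y)) => Ey; last by exists y.
by move: nxy; rewrite (entry_unique kB Ex Ey) eqxx.
Qed.

End Rooted.

Section Connectivity.
Variables (T : finType) (e : rel T).
Hypothesis e_sym : symmetric e.
Hypothesis e_conn : forall x y : T, connect e x y.

Lemma pbE (P : Prop) : pb P = true <-> P.
Proof. by rewrite /pb; case: excluded_middle_informative. Qed.

Lemma kappa_ge v w F : v != w -> disjoint_vw_paths e v w F -> size F < #|T|.+2 ->
  exists m, kappa e v w = Some m /\ size F <= m.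
Proof.
move=> nvw dF sF; rewrite /kappa (negbTE nvw); eexists; split; first reflexivity.
apply: (@leq_bigmax_cond _ _ (fun k => nat_of_ord k) (Ordinal sF)).
by apply/pbE; exists F.
Qed.

Lemma kappa_le v w m : v != w ->
  (forall F, disjoint_vw_paths e v w F -> size F <= m) ->
  exists m', kappa e v w = Some m' /\ m' <= m.
Proof.
move=> nvw Fm; rewrite /kappa (negbTE nvw); eexists; split; first reflexivity.
by apply/bigmax_leqP => i /pbE [F [dF <-]]; apply: Fm.
Qed.

Lemma vw_pathP v w P : vw_path e v w P ->
  [/\ path e v (rcons P w), v != w, v \notin P, w \notin P & uniq P].
Proof.
case/andP=> p; rewrite /= mem_rcons inE negb_or rcons_uniq => /and3P[/andP[-> ->] -> ->].
by [].
Qed.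

Lemma exists_vw_path v w : v != w -> exists P, vw_path e v w P.
Proof.
move=> nvw; have /connectP [s ps ls] := e_conn v w.
case: (shortenP ps) ls => p' pp up _ lp.
case/lastP: p' pp up lp => [|P z] pp up; first by move=> /= evw; rewrite -evw eqxx in nvw.
by rewrite last_rcons => ->; exists P; rewrite /vw_path pp up.
Qed.

Lemma kappa_ge1 v w : v != w -> exists m, kappa e v w = Some m /\ 1 <= m.
Proof.
move=> nvw; have [P hP] := exists_vw_path nvw.
have [_ _ _ _ uP] := vw_pathP hP.
have dF : disjoint_vw_paths e v w [:: P] by rewrite /disjoint_vw_paths /= hP cats0 uP.
exact: kappa_ge nvw dF _.
Qed.

(* A cycle through the edge [va] is an ear on the block [{v, a}]. *)
Lemma blocklike_cycle v a Q : e v a -> path e a (rcons Q v) -> uniq (v :: a :: Q) ->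
  Q != [::] -> blocklike e ([set v; a] :|: [set z in Q]) /\ 2 < #|[set v; a] :|: [set z in Q]|.
Proof.
move=> eva pQ uQ nQ.
move: uQ; rewrite /= !inE negb_or => /andP[/andP[nva vQ] /andP[aQ uQ]].
have QnB : all (fun z => z \notin [set v; a]) Q.
  apply/allP => z zQ; rewrite !inE; apply/norP.
  by split; apply: contraTneq zQ => ->.
split.
  by apply: (blocklike_ear e_sym (blocklike_edge e_sym eva) (x := a) (y := v));
    rewrite ?inE ?eqxx ?orbT // eq_sym.
case: Q nQ QnB {pQ vQ aQ uQ} => // q Q _ /andP[qB _].
have /proper_card : [set v; a] \proper [set v; a] :|: [set z in q :: Q].
  by apply/properP; split; [exact: subsetUl | exists q; rewrite // !inE eqxx orbT].
by rewrite cards2 nva.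
Qed.

Lemma cycle_of_vw_paths v w a P1 P2 : vw_path e v w (a :: P1) -> vw_path e v w P2 ->
  uniq ((a :: P1) ++ P2) -> exists C, [/\ blocklike e C, v \in C, w \in C & 2 < #|C|].
Proof.
move=> /vw_pathP[p1 nvw vP1 wP1 _] /vw_pathP[p2 _ vP2 wP2 _] u12.
move: p1 => /= /andP[eva p1].
have [|||bC cC] := blocklike_cycle (Q := P1 ++ w :: rev P2) eva.
- by rewrite rcons_cat /= -cat_rcons cat_path p1 last_rcons (path_rev_rcons e_sym p2).
- rewrite (perm_uniq (s2 := v :: w :: (a :: P1) ++ P2)); last first.
    rewrite perm_cons -[a :: P1 ++ _]/((a :: P1) ++ [:: w] ++ rev P2) perm_catCA /=.
    by rewrite !perm_cons perm_cat2l perm_rev.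
  rewrite cons_uniq inE !mem_cat negb_or nvw (negbTE vP1) (negbTE vP2) /=.
  move: u12 => /= ->.
  by rewrite -cat_cons mem_cat negb_or wP1 wP2.
- by case: P1 {p1 vP1 wP1 u12}.
exists ([set v; a] :|: [set z in P1 ++ w :: rev P2]); split => //.
  by rewrite !inE eqxx.
by rewrite !inE mem_cat inE eqxx !orbT.
Qed.

Lemma two_vw_paths_blocklike v w F : disjoint_vw_paths e v w F -> 1 < size F ->
  exists C, [/\ blocklike e C, v \in C, w \in C & 2 < #|C|].
Proof.
case: F => [|P1 [|P2 F]] // /and3P[/= /and3P[h1 h2 _] /= /andP[+ _] u] _.
rewrite inE negb_or => /andP[n12 _]; move: u; rewrite catA cat_uniq => /andP[u12 _].
case: P1 h1 n12 u12 => [|a P1] h1 n12 u12; last exact: cycle_of_vw_paths h1 h2 u12.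
case: P2 h2 n12 u12 => [|b P2] h2 n12 u12; first by rewrite eqxx in n12.
by apply: cycle_of_vw_paths h2 h1 _; rewrite cats0.
Qed.

(* Two internally disjoint v-w paths would span a block of size at least 3. *)
Lemma kappa_eq1 v w : v != w ->
  (forall B, B \in blocks e -> v \in B -> w \in B -> #|B| <= 2) ->
  kappa e v w = Some 1.
Proof.
move=> nvw small.
have [m [km m1]] := kappa_ge1 nvw.
have [m' [km' m'1]] : exists m', kappa e v w = Some m' /\ m' <= 1.
  apply: kappa_le => // F dF; rewrite leqNgt; apply/negP => sF.
  have [C [bC vC wC cC]] := two_vw_paths_blocklike dF sF.
  have [B mB sCB] := maxset_exists bC.
  have kB : B \in blocks e by rewrite inE.
  have := leq_trans cC (subset_leq_card sCB).
  by rewrite ltnNge small // (subsetP sCB).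
rewrite km'; congr Some; apply/eqP; rewrite eqn_leq m'1.
by move: km'; rewrite km => -[<-].
Qed.

End Connectivity.

Section BlockNeighbors.
Variables (T : finType) (e : rel T).
Hypotheses (e_sym : symmetric e) (e_irr : irreflexive e).

Definition block_neighbors (B : {set T}) (p : T) : {set T} := [set x in B | e x p].

(* Otherwise the end of the path would be a detour outside [B]. *)
Lemma vw_path_last_in_block B u p P : B \in blocks e -> u \in B -> p \in B ->
  vw_path e u p P -> last u P \in B.
Proof.
move=> kB uB pB /vw_pathP[pP nup _ pnP _]; apply/negPn/negP => xB.
case/lastP: P pP pnP xB => [|P0 x] pP pnP; first by rewrite /= uB.
rewrite last_rcons => xB.
move: (path_rev_rcons e_sym pP); rewrite rev_rcons /= => /andP[epx px].
have lu : last x (rcons (rev P0) u) \in B by rewrite last_rcons.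
have [Q [z [rest [es zB aQ]]]] := path_first_hit xB px lu.
have zp : p != z.
  apply/eqP => epz; subst z.
  have : p \in rcons (rev P0) u by rewrite es mem_cat inE eqxx orbT.
  rewrite mem_rcons inE mem_rev => /orP[/eqP epu|pP0]; first by rewrite epu eqxx in nup.
  by move: pnP; rewrite mem_rcons inE pP0 orbT.
apply: (block_no_detour e_sym kB pB zB zp (Q := x :: Q)) => //; first by rewrite /= xB aQ.
rewrite /= epx rcons_path.
by move: px; rewrite es cat_path /= => /andP[-> /andP[-> _]].
Qed.

Lemma map_last_uniq u p F : all (vw_path e u p) F -> uniq F -> uniq (flatten F) ->
  uniq (map (last u) F).
Proof.
have last_mem P : P != [::] -> last u P \in P by case: P => //= b P _; rewrite mem_last.
have unP P : vw_path e u p P -> u \notin P by case/vw_pathP.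
elim: F => //= P F IH /andP[hP aF] /andP[PF uF]; rewrite cat_uniq => /and3P[_ dis ufl].
rewrite IH // andbT; apply/mapP => -[P2 P2F eql].
have h2 : vw_path e u p P2 := allP aF P2 P2F.
case: (eqVneq P [::]) => [eP|nP].
  subst P; case: (eqVneq P2 [::]) => [eP2|nP2]; first by move: PF; rewrite -eP2 P2F.
  by move: (unP _ h2); rewrite (_ : u = last u P2) ?last_mem.
case: (eqVneq P2 [::]) => [eP2|nP2].
  by move: (unP _ hP); rewrite -{1}(_ : last u P = u) ?last_mem // eql eP2.
move/hasP: dis; apply; exists (last u P); last exact: last_mem.
by apply/flattenP; exists P2 => //; rewrite eql last_mem.
Qed.

(* Distinct internally disjoint paths end with distinct neighbors of [p]. *)
Lemma disjoint_vw_paths_le_neighbors B u p F : B \in blocks e -> u \in B -> p \in B ->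
  disjoint_vw_paths e u p F -> size F <= #|block_neighbors B p|.
Proof.
move=> kB uB pB /and3P[aF uF ufl].
rewrite -(size_map (last u)) cardE.
apply: uniq_leq_size; first exact: map_last_uniq aF uF ufl.
move=> x /mapP [P PF ->]; rewrite mem_enum inE.
have hP := allP aF P PF; have [pP _ _ _ _] := vw_pathP hP.
rewrite (vw_path_last_in_block kB uB pB hP) /=.
by move: pP; rewrite rcons_path => /andP[].
Qed.

Lemma card_gt2_other (B : {set T}) x y : 2 < #|B| ->
  exists2 z, z \in B & z \notin [set x; y].
Proof.
move=> cB; apply/subsetPn; apply: contraTN cB => /subset_leq_card.
by rewrite -leqNgt cards2 => /leq_trans; apply; case: (x != y).
Qed.

Lemma block_two_vw_paths B u p : B \in blocks e -> 2 < #|B| -> u \in B -> p \in B ->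
  u != p -> e u p -> exists F, disjoint_vw_paths e u p F /\ size F = 2.
Proof.
move=> kB cB uB pB nup eup; have bB := blocks_blocklike kB.
have [y yB] := card_gt2_other u p cB; rewrite !inE negb_or => /andP[yu yp].
have uBp : u \in B :\ p by rewrite !inE nup.
have yBp : y \in B :\ p by rewrite !inE yp.
have uy : u != y by rewrite eq_sym.
have [x xBp eux] := connected_in_neighbor (blocklike_connected_del p bB) uBp yBp uy.
have xu : x != u by apply: contraTneq eux => ->; rewrite e_irr.
have xp : x != p by move: xBp; rewrite !inE => /andP[].
have xBu : x \in B :\ u by move: xBp; rewrite !inE xu => /andP[_ ->].
have pBu : p \in B :\ u by rewrite !inE eq_sym nup.
have /connectP [s ps ls] := connected_in_connect (blocklike_connected_del u bB) xBu pBu.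
case: (shortenP ps) ls => Q0 pQ0 uQ0 _.
case/lastP: Q0 pQ0 uQ0 => [|Q z] pQ0 uQ0; first by move=> /= epx; rewrite epx eqxx in xp.
rewrite last_rcons => ez; subst z.
have unQ : u \notin rcons Q p.
  by apply/negP => uQ; move: (allP (restr_path_mem pQ0) u uQ); rewrite !inE eqxx.
have h1 : vw_path e u p [::] by rewrite /vw_path /= eup /= inE nup.
have h2 : vw_path e u p (x :: Q).
  by rewrite /vw_path /= eux (restr_path_edge pQ0) /= inE negb_or eq_sym xu unQ.
exists [:: [::]; x :: Q]; split => //.
rewrite /disjoint_vw_paths /= h1 h2 /= cats0.
by move: uQ0; rewrite /= mem_rcons inE negb_or rcons_uniq => /andP[/andP[_ ->] /andP[_ ->]].
Qed.

Lemma block_neighbors_gt1 B p : B \in blocks e -> 2 < #|B| -> p \in B ->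
  1 < #|block_neighbors B p|.
Proof.
move=> kB cB pB; have bB := blocks_blocklike kB.
have [y yB] := card_gt2_other p p cB; rewrite setUid inE => yp.
have py : p != y by rewrite eq_sym.
have [u1 u1B epu1] := connected_in_neighbor (blocklike_connected bB) pB yB py.
have u1p : u1 != p by apply: contraTneq epu1 => ->; rewrite e_irr.
have [z zB] := card_gt2_other u1 p cB; rewrite !inE negb_or => /andP[zu1 zp].
have pBu : p \in B :\ u1 by rewrite !inE eq_sym u1p.
have zBu : z \in B :\ u1 by rewrite !inE zu1.
have pz : p != z by rewrite eq_sym.
have [u2 u2B epu2] := connected_in_neighbor (blocklike_connected_del u1 bB) pBu zBu pz.
have u12 : u1 != u2 by move: u2B; rewrite !inE eq_sym => /andP[].
have sub : [set u1; u2] \subset block_neighbors B p.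
  apply/subsetP => x; rewrite !inE => /orP[]/eqP->; first by rewrite u1B e_sym.
  by move: u2B; rewrite !inE => /andP[_ ->]; rewrite e_sym.
by move: (subset_leq_card sub); rewrite cards2 u12.
Qed.

End BlockNeighbors.

Section Counting.
Variables (T : finType) (e : rel T).
Hypotheses (e_sym : symmetric e) (e_irr : irreflexive e).
Hypothesis e_conn : forall x y : T, connect e x y.
Hypothesis two : 1 < #|T|.
Variables (W : {set T}) (r : T).
Hypotheses (resW : resolving e W) (rW : r \in W).

Lemma resolvingP v1 v2 : {in W, forall w, kappa e v1 w = kappa e v2 w} -> v1 = v2.
Proof.
move=> kW; move: resW => /forallP/(_ v1)/forallP/(_ v2)/implyP res.
by apply/eqP/res/forall_inP => w wW; apply/eqP/kW.
Qed.

Lemma exists_neighbor x : exists y, e x y.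
Proof.
have : ~~ ([set: T] \subset [set x]).
  by apply/negP => /subset_leq_card; rewrite cardsT cards1 leqNgt two.
case/subsetPn => y _; rewrite inE => yx.
have /connectP [[|z s] ps ls] := e_conn x y; first by rewrite ls eqxx in yx.
by move: ps => /= /andP[exz _]; exists z.
Qed.

Lemma block_card_gt1 B : B \in blocks e -> 1 < #|B|.
Proof.
move=> kB; rewrite ltnNge; apply/negP => small.
pose x := odflt r [pick z in B].
have Bx : B \subset [set x].
  apply/subsetP => z zB; rewrite inE /x; case: pickP => [z' z'B|]; last by move/(_ z); rewrite zB.
  by rewrite (card_le1_eqP small z z').
have [y exy] := exists_neighbor x.
have xy : x != y by apply: contraTneq exy => ->; rewrite e_irr.
have sBC : B \subset [set x; y] by apply: subset_trans Bx (subsetUl _ _).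
have eC := blocks_max kB (blocklike_edge e_sym exy) sBC.
by move: small; rewrite -eC cards2 xy.
Qed.

Definition childb (B : {set T}) (v : T) := pb (child e r B v).

Lemma childbP (B : {set T}) v : childb B v <-> child e r B v.
Proof. exact: pbE. Qed.

Lemma not_child_entry (B : {set T}) v : v \in B -> ~ child e r B v -> entry e r B v.
Proof. by move=> vB nc; apply: NNPP => nE; apply: nc. Qed.

Lemma child_other_entry B B' v : B \in blocks e -> B' \in blocks e -> B' != B ->
  child e r B v -> v \in B' -> entry e r B' v.
Proof.
move=> kB kB' nB cv vB'; apply: not_child_entry => // cv'.
by move/eqP: nB; apply; apply: (child_unique e_sym e_conn kB' kB cv' cv).
Qed.

Definition W_parents := [set B : {set T} | [exists w in W, childb B w]].

Definition relays := [set B : {set T} | [exists v, childb B v && [exists B' : {set T},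
  [&& B' \in blocks e, B' != B, 2 < #|B'|, v \in B' & [exists w in W, w \in B']]]]].

Definition blocks_Wchild := blocks e :&: W_parents.
Definition blocks_noWchild := blocks e :\: W_parents.
Definition blocks_relay := blocks_noWchild :&: relays.
Definition blocks_rest := blocks_noWchild :\: relays.

Lemma noWchild_child_notin B v : B \in blocks_noWchild -> child e r B v -> v \notin W.
Proof.
rewrite !inE => /andP[nX _] cv; apply: contra nX => vW.
by apply/existsP; exists v; rewrite vW; apply/childbP.
Qed.

Lemma card_blocks_Wchild : #|blocks_Wchild| < #|W|.
Proof.
pose f B := odflt r [pick w in W | childb B w].
have fP B : B \in blocks_Wchild -> f B \in W /\ child e r B (f B).
  rewrite !inE => /andP[kB /existsP[w /andP[wW cw]]].
  rewrite /f; case: pickP => [w' /andP[w'W cw']|/(_ w)] /=; first by split => //; apply/childbP.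
  by rewrite wW cw.
have inj : {in blocks_Wchild &, injective f}.
  move=> B1 B2 h1 h2 e12; have [_ c1] := fP _ h1; have [_ c2] := fP _ h2.
  move: h1 h2; rewrite !in_setI => /andP[k1 _] /andP[k2 _].
  by rewrite e12 in c1; apply: (child_unique e_sym e_conn k1 k2 c1 c2).
have sub : f @: blocks_Wchild \subset W :\ r.
  apply/subsetP => w /imsetP [B hB ->]; have [wW cw] := fP _ hB.
  by rewrite !inE wW andbT; apply: (child_neq_root cw).
rewrite (cardsD1 r W) rW add1n ltnS -(card_in_imset inj).
exact: subset_leq_card.
Qed.

Lemma blocks_noWchild_block B : B \in blocks_noWchild -> B \in blocks e.
Proof. by rewrite in_setD => /andP[]. Qed.

Lemma blocks_relay_noWchild B : B \in blocks_relay -> B \in blocks_noWchild.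
Proof. by rewrite in_setI => /andP[]. Qed.

Lemma blocks_rest_noWchild B : B \in blocks_rest -> B \in blocks_noWchild.
Proof. by rewrite in_setD => /andP[]. Qed.

(* A relay block is sent to the block carrying its relay child, whose child
   in [W] then exists because that child is the entry of the target block. *)
Lemma card_blocks_relay : #|blocks_relay| <= #|blocks_Wchild|.
Proof.
pose P B (B' : {set T}) := [exists v, childb B v && [&& B' \in blocks e, B' != B,
  2 < #|B'|, v \in B' & [exists w in W, w \in B']]].
pose f B := odflt set0 [pick B' | P B B'].
have fP B : B \in blocks_relay -> exists v, [/\ child e r B v, f B \in blocks e,
    f B != B, v \in f B & exists2 w, w \in W & w \in f B].
  rewrite in_setI [B \in relays]inE => /andP[_ /existsP [v /andP[cv /existsP[B' hB']]]].
  rewrite /f; case: pickP => [B'' /existsP[v' /andP[cv' /and5P[k1 n1 _ v1]]]|/(_ B')] /=.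
    by case/exists_inP => w wW w1; exists v'; split => //; [apply/childbP | exists w].
  by move/existsP; case; exists v; rewrite cv.
have inj : {in blocks_relay &, injective f}.
  move=> B1 B2 h1 h2 e12.
  have [v1 [c1 k1 n1 m1 _]] := fP _ h1; have [v2 [c2 k2 n2 m2 _]] := fP _ h2.
  have kB1 := blocks_noWchild_block (blocks_relay_noWchild h1).
  have kB2 := blocks_noWchild_block (blocks_relay_noWchild h2).
  have E1 := child_other_entry kB1 k1 n1 c1 m1.
  rewrite e12 in k1 n1 m1 E1.
  have E2 := child_other_entry kB2 k2 n2 c2 m2.
  have ev := entry_unique e_sym k2 E1 E2; subst v2.
  exact: (child_unique e_sym e_conn kB1 kB2 c1 c2).
have sub : f @: blocks_relay \subset blocks_Wchild.
  apply/subsetP => B' /imsetP [B hB ->].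
  have [v [cv k' n' m' [w wW w']]] := fP _ hB.
  have hB2 := blocks_relay_noWchild hB.
  rewrite in_setI k' inE; apply/exists_inP; exists w => //; apply/childbP; split => // Ew.
  have ewv := entry_unique e_sym k' Ew (child_other_entry (blocks_noWchild_block hB2) k' n' cv m').
  by move: (noWchild_child_notin hB2 cv); rewrite -ewv wW.
by rewrite -(card_in_imset inj); apply: subset_leq_card.
Qed.

Definition free_vertices :=
  [set v | (v \notin W) && [forall w in W, kappa e v w == Some 1]].

Lemma card_free_vertices : #|free_vertices| <= 1.
Proof.
apply/card_le1_eqP => x y; rewrite !inE => /andP[_ /forall_inP kx] /andP[_ /forall_inP ky].
by apply: resolvingP => w wW; rewrite (eqP (kx w wW)) (eqP (ky w wW)).
Qed.

Lemma rest_big_block B u w B' : B \in blocks_rest -> child e r B u -> w \in W ->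
  B' \in blocks e -> u \in B' -> w \in B' -> 2 < #|B'| -> B' = B /\ entry e r B w.
Proof.
move=> hB cu wW k' u' w' c'.
have hB2 := blocks_rest_noWchild hB.
case: (eqVneq B' B) => [eB|nB].
  subst B'; split => //; apply: not_child_entry => // cw.
  by move: (noWchild_child_notin hB2 cw); rewrite wW.
exfalso; move: hB; rewrite in_setD [B \in relays]inE => /andP[/negP + _]; apply.
apply/existsP; exists u; rewrite (proj2 (childbP _ _) cu) /=.
by apply/existsP; exists B'; rewrite k' nB c' u' /=; apply/exists_inP; exists w.
Qed.

Lemma rest_neighbor_kappa B p u : B \in blocks_rest -> 2 < #|B| -> p \in W ->
  entry e r B p -> u \in block_neighbors e B p ->
  {in W, forall w, w != p -> kappa e u w = Some 1} /\
  exists m, kappa e u p = Some m /\ 2 <= m <= #|block_neighbors e B p|.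
Proof.
move=> hB cB pW Ep; rewrite inE => /andP[uB eup].
have kB := blocks_noWchild_block (blocks_rest_noWchild hB).
have pB : p \in B by case: Ep.
have up : u != p by apply: contraTneq eup => ->; rewrite e_irr.
have cu : child e r B u.
  by split => // Eu; move: up; rewrite (entry_unique e_sym kB Eu Ep) eqxx.
split=> [w wW wp|].
  have uw : u != w.
    by apply: contraNneq (noWchild_child_notin (blocks_rest_noWchild hB) cu) => ->.
  apply: (kappa_eq1 e_sym e_conn uw) => B' k' u' w'; rewrite leqNgt; apply/negP => c'.
  have [_ Ew] := rest_big_block hB cu wW k' u' w' c'.
  by move: wp; rewrite (entry_unique e_sym kB Ew Ep) eqxx.
have [F [dF sF]] := block_two_vw_paths e_irr kB cB uB pB up eup.
have sFT : size F < #|T|.+2 by rewrite sF; lia.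
have [m [km mge]] := kappa_ge up dF sFT.
have [m' [km' mle]] :=
  kappa_le up (fun F0 dF0 => disjoint_vw_paths_le_neighbors e_sym kB uB pB dF0).
rewrite km in km'; case: km' => <- in mle.
by exists m; rewrite km -sF mge mle.
Qed.

(* The neighbors of [p] in [B] are told apart only by [kappa _ p], which
   takes fewer than [#|N|] values there. *)
Lemma rest_entry_notin_W B p : B \in blocks_rest -> 2 < #|B| -> p \in W ->
  entry e r B p -> False.
Proof.
move=> hB cB pW Ep.
have kB := blocks_noWchild_block (blocks_rest_noWchild hB).
have pB : p \in B by case: Ep.
set N := block_neighbors e B p.
have kN := rest_neighbor_kappa hB cB pW Ep.
pose g u := odflt 0 (kappa e u p).
have ginj : {in N &, injective g}.
  move=> u1 u2 h1 h2 eg; apply: resolvingP => w wW.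
  have [k1 [m1 [km1 _]]] := kN u1 h1; have [k2 [m2 [km2 _]]] := kN u2 h2.
  case: (eqVneq w p) => [->|wp]; last by rewrite k1 ?k2.
  by move: eg; rewrite /g km1 km2 /= => ->.
have us : uniq (map g (enum N)).
  by rewrite map_inj_in_uniq ?enum_uniq // => x y; rewrite !mem_enum; apply: ginj.
have ss : {subset map g (enum N) <= seq.iota 2 #|N|.-1}.
  move=> m /mapP [u]; rewrite mem_enum => uN ->.
  have [_ [m' [k' /andP[m2 mN]]]] := kN u uN.
  by rewrite /g k' /= mem_iota m2 /=; move: mN; rewrite -/N; lia.
have := uniq_leq_size us ss; rewrite size_map size_iota -cardE.
have := block_neighbors_gt1 e_sym e_irr kB cB pB; rewrite -/N; lia.
Qed.


(* Every remaining block has a child of connectivity 1 to all of [W], and such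
   a child is unique by resolvability. *)
Lemma card_blocks_rest : #|blocks_rest| <= 1.
Proof.
pose f B := odflt r [pick v | childb B v].
have fP B : B \in blocks_rest -> child e r B (f B).
  move=> hB; have kB := blocks_noWchild_block (blocks_rest_noWchild hB).
  have [x [y [xB yB xy]]] := card_gt1P (block_card_gt1 kB).
  have [v /childbP cv] := child_exists e_sym r kB xB yB xy.
  by rewrite /f; case: pickP => [v' /childbP //|/(_ v)]; rewrite cv.
have inj : {in blocks_rest &, injective f}.
  move=> B1 B2 h1 h2 e12; have c1 := fP _ h1; rewrite e12 in c1.
  apply: (child_unique e_sym e_conn _ _ c1 (fP _ h2));
    exact/blocks_noWchild_block/blocks_rest_noWchild.
have sub : f @: blocks_rest \subset free_vertices.
  apply/subsetP => v /imsetP [B hB ->].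
  have cv := fP _ hB; have vW := noWchild_child_notin (blocks_rest_noWchild hB) cv.
  rewrite inE vW; apply/forall_inP => w wW; apply/eqP.
  have vw : f B != w by apply: contraNneq vW => ->.
  apply: (kappa_eq1 e_sym e_conn vw) => B' k' v' w'; rewrite leqNgt; apply/negP => c'.
  have [eB Ew] := rest_big_block hB cv wW k' v' w' c'; subst B'.
  exact: (rest_entry_notin_W hB c' wW Ew).
rewrite -(card_in_imset inj); apply: leq_trans card_free_vertices.
exact: subset_leq_card.
Qed.

Lemma nblocks_lt_twice_card : (nblocks e).+1 <= 2 * #|W|.
Proof.
have -> : nblocks e = #|blocks_Wchild| + #|blocks_relay| + #|blocks_rest|.
  by rewrite -addnA cardsID cardsID.
have := card_blocks_Wchild; have := card_blocks_relay; have := card_blocks_rest; lia.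
Qed.

End Counting.

Lemma resolving_setT (T : finType) (e : rel T) : resolving e [set: T].
Proof.
apply/forallP => v1; apply/forallP => v2; apply/implyP => /forall_inP/(_ v1 (in_setT _)).
by rewrite /kappa eqxx; case: (eqVneq v2 v1) => // _ /eqP.
Qed.

Lemma resolving_set0 (T : finType) (e : rel T) : resolving e set0 -> #|T| <= 1.
Proof.
move/forallP => res; apply/card_le1_eqP => x y _ _; apply/eqP.
move: (res y) => /forallP/(_ x)/implyP; apply.
by apply/forall_inP => w; rewrite inE.
Qed.

Lemma nblocks_lt_twice_cdim (T : finType) (e : rel T) : symmetric e -> irreflexive e ->
  (forall x y : T, connect e x y) -> 1 < #|T| -> (nblocks e).+1 <= 2 * cdim e.
Proof.
move=> e_sym e_irr e_conn two.
have bound W : resolving e W -> (nblocks e).+1 <= 2 * #|W|.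
  move=> resW; case: (set_0Vmem W) => [W0|[r rW]].
    by move: resW; rewrite W0 => /resolving_set0; rewrite leqNgt two.
  exact: (nblocks_lt_twice_card e_sym e_irr e_conn two resW rW).
rewrite /cdim; apply: (big_ind (fun n => (nblocks e).+1 <= 2 * n)).
- by rewrite -cardsT; apply/bound/resolving_setT.
- by move=> m n; rewrite /minn; case: ifP.
- exact: bound.
Qed.

Import Order.TTheory GRing.Theory Num.Theory.
Unset Implicit Arguments.

Theorem mainTheorem13 (T : finType) (e : rel T)
  (e_sym : symmetric e) (e_irr : irreflexive e)
  (e_conn : forall x y : T, connect e x y)
  (two : 1 < #|T|) :
  (((nblocks e)%:R + 1) / 2 <= (cdim e)%:R :> rat)%R.
Proof.
rewrite ler_pdivrMr // natr1 -natrM ler_nat mulnC.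
exact: nblocks_lt_twice_cdim.
Qed.
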